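(* A magma is free if and only if it is initial and equidecomposable.
   Context: A magma is a set $M$ with a binary operation $+$. $M$ is equidecomposable if for all $x,y,x',y'\in M$, $x+y=x'+y'$ implies $x=x'$ and $y=y'$. The set of indecomposable elements of $M$ is $M\setminus(M+M)$ (elements not of the form $x+y$). For $X\subseteq M$, $\langle X\rangle$ is the least submagma of $M$ containing $X$. The initial part of $M$ is $\mathfrak{I}(M)=\langle M\setminus(M+M)\rangle$, and $M$ is initial if $\mathfrak{I}(M)=M$. A magma is free if it is isomorphic to the free magma $\mathbb{M}_A$ on some non-empty set $A$, i.e. the magma of non-associative words (fully parenthesized formal sums) over $A$ with $x+y=(x,y)$. *)

Set Implicit Arguments.

Definition equidecomposable (M : Type) (op : M -> M -> M) : Prop :=
  forall x y x' y' : M, op x y = op x' y' -> x = x' /\ y = y'.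

Definition indecomposable (M : Type) (op : M -> M -> M) (z : M) : Prop :=
  ~ (exists x y : M, op x y = z).

Definition submagma (M : Type) (op : M -> M -> M) (S : M -> Prop) : Prop :=
  forall x y : M, S x -> S y -> S (op x y).

Definition generated (M : Type) (op : M -> M -> M) (X : M -> Prop) (z : M) : Prop :=
  forall S : M -> Prop, submagma op S -> (forall x, X x -> S x) -> S z.

Definition initial_part (M : Type) (op : M -> M -> M) : M -> Prop :=
  generated op (indecomposable op).

Definition initial (M : Type) (op : M -> M -> M) : Prop :=
  forall z : M, initial_part op z.

Inductive free_magma (A : Type) : Type :=
| fm_leaf : A -> free_magma A
| fm_node : free_magma A -> free_magma A -> free_magma A.

Definition magma_iso (M N : Type) (opM : M -> M -> M) (opN : N -> N -> N)
  (f : M -> N) : Prop :=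
  (forall x y : M, f (opM x y) = opN (f x) (f y)) /\
  (forall x y : M, f x = f y -> x = y) /\
  (forall z : N, exists x : M, f x = z).

Definition free (M : Type) (op : M -> M -> M) : Prop :=
  exists (A : Type), inhabited A /\
    exists f : free_magma A -> M, magma_iso (@fm_node A) op f.

(* A free magma is equidecomposable because its constructor is injective, and
   initial because its indecomposables are exactly the leaves, which generate
   it; an isomorphism carries both properties over.  Conversely, if M is
   initial and equidecomposable, let A be its set of indecomposables and
   evaluate words over A in M.  Evaluation is a homomorphism whose image is a
   submagma containing A, hence everything; it is injective by induction on
   words, since a leaf evaluates to an indecomposable, a node to a sum, and
   sums decompose uniquely. *)
From Stdlib Require Import ProofIrrelevance.

Set Implicit Arguments.

Section Generated.

Variables (M : Type) (op : M -> M -> M).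

Lemma generated_base {X : M -> Prop} {z : M} : X z -> generated op X z.
Proof. intros Xz S _ XS. exact (XS z Xz). Qed.

Lemma generated_submagma (X : M -> Prop) : submagma op (generated op X).
Proof. intros x y Gx Gy S opS XS. apply opS; [apply Gx | apply Gy]; assumption. Qed.

Lemma initial_part_submagma : submagma op (initial_part op).
Proof. apply generated_submagma. Qed.

Lemma initial_indecomposable_inhabited :
  inhabited M -> initial op -> inhabited {z : M | indecomposable op z}.
Proof.
  intros [m] Hini.
  apply (Hini m (fun _ => inhabited {z : M | indecomposable op z})).
  - intros x y Sx _. exact Sx.
  - intros z Hz. exact (inhabits (exist _ z Hz)).
Qed.

End Generated.

Section Isomorphism.

Variables (N M : Type) (opN : N -> N -> N) (opM : M -> M -> M) (f : N -> M).
Hypothesis f_iso : magma_iso opN opM f.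

Lemma iso_indecomposable (z : N) :
  indecomposable opN z -> indecomposable opM (f z).
Proof.
  destruct f_iso as [f_hom [f_inj f_surj]].
  intros Hz [x [y Hxy]]. apply Hz.
  destruct (f_surj x) as [u <-], (f_surj y) as [v <-].
  exists u, v. apply f_inj. rewrite f_hom. exact Hxy.
Qed.

Lemma iso_initial : initial opN -> initial opM.
Proof.
  destruct f_iso as [f_hom [_ f_surj]].
  intros Hini z. destruct (f_surj z) as [w <-].
  apply (Hini w (fun w => initial_part opM (f w))).
  - intros x y Hx Hy. rewrite f_hom. exact (initial_part_submagma Hx Hy).
  - intros x Hx. exact (generated_base (iso_indecomposable Hx)).
Qed.

Lemma iso_equidecomposable : equidecomposable opN -> equidecomposable opM.
Proof.
  destruct f_iso as [f_hom [f_inj f_surj]].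
  intros Heq x y x' y' H.
  destruct (f_surj x) as [u <-], (f_surj y) as [v <-],
           (f_surj x') as [u' <-], (f_surj y') as [v' <-].
  rewrite <- !f_hom in H. apply f_inj, Heq in H. destruct H as [-> ->]. split; reflexivity.
Qed.

End Isomorphism.

Section FreeMagma.

Variable A : Type.

Lemma free_magma_equidecomposable : equidecomposable (@fm_node A).
Proof. intros x y x' y' H. injection H as -> ->. split; reflexivity. Qed.

Lemma fm_leaf_indecomposable (a : A) : indecomposable (@fm_node A) (fm_leaf a).
Proof. intros [x [y H]]. discriminate H. Qed.

Lemma free_magma_initial : initial (@fm_node A).
Proof.
  intros w. induction w as [a | u IHu v IHv].
  - exact (generated_base (@fm_leaf_indecomposable a)).
  - exact (initial_part_submagma IHu IHv).
Qed.

Variables (M : Type) (op : M -> M -> M) (g : A -> M).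

Fixpoint fm_eval (w : free_magma A) : M :=
  match w with
  | fm_leaf a => g a
  | fm_node u v => op (fm_eval u) (fm_eval v)
  end.

Lemma fm_eval_generated (X : M -> Prop) (z : M) :
  (forall x, X x -> exists a, g a = x) ->
  generated op X z -> exists w, fm_eval w = z.
Proof.
  intros gX Gz. apply (Gz (fun z => exists w, fm_eval w = z)).
  - intros x y [u <-] [v <-]. exists (fm_node u v). reflexivity.
  - intros x Xx. destruct (gX x Xx) as [a <-]. exists (fm_leaf a). reflexivity.
Qed.

Lemma fm_eval_inj :
  equidecomposable op -> (forall a, indecomposable op (g a)) ->
  (forall a b, g a = g b -> a = b) ->
  forall u v, fm_eval u = fm_eval v -> u = v.
Proof.
  intros Heq g_indec g_inj u.
  induction u as [a | u1 IH1 u2 IH2]; intros [b | v1 v2]; simpl; intros H.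
  - rewrite (g_inj a b H). reflexivity.
  - exfalso. apply (g_indec a). exists (fm_eval v1), (fm_eval v2). symmetry. exact H.
  - exfalso. apply (g_indec b). exists (fm_eval u1), (fm_eval u2). exact H.
  - apply Heq in H. destruct H as [H1 H2]. rewrite (IH1 _ H1), (IH2 _ H2). reflexivity.
Qed.

End FreeMagma.

Lemma initial_equidecomposable_iso (M : Type) (op : M -> M -> M) :
  initial op -> equidecomposable op ->
  magma_iso (@fm_node {z : M | indecomposable op z}) op
    (fm_eval op (@proj1_sig M (indecomposable op))).
Proof.
  intros Hini Heq. split; [|split].
  - reflexivity.
  - apply fm_eval_inj; [exact Heq | exact (@proj2_sig M _) |].
    intros [a Ha] [b Hb] H. simpl in H. subst b.
    rewrite (proof_irrelevance _ Ha Hb). reflexivity.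
  - intros z. refine (fm_eval_generated _ _ (Hini z)).
    intros x Hx. exists (exist _ x Hx). reflexivity.
Qed.

Theorem theorem4p5 (M : Type) (op : M -> M -> M) (HM : inhabited M) :
  free op <-> (initial op /\ equidecomposable op).
Proof.
  split.
  - intros [A [_ [f f_iso]]]. split.
    + exact (iso_initial f_iso (@free_magma_initial A)).
    + exact (iso_equidecomposable f_iso (@free_magma_equidecomposable A)).
  - intros [Hini Heq].
    exists {z : M | indecomposable op z}. split.
    + exact (initial_indecomposable_inhabited HM Hini).
    + eexists. exact (initial_equidecomposable_iso Hini Heq).
Qed.
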